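(* Let $A$ be an associative unital algebra and $(H,\pi_r,\psi_r)$ a right twisting datum for $A$, where $H$ is a Hopf algebra with bijective antipode $S$. Define $\pi_l:H^{op}\otimes A\to A$, $\pi_l(h\otimes a)=a\cdot h$, and $\psi_l:A\to H^{op}\otimes A$, $\psi_l(a)=S^{-1}(a_{<1>})\otimes a_{<0>}$. Then $(H^{op},\pi_l,\psi_l)$ is a left twisting datum for $A$, and the map $\lambda:(A,\diamond)\to(A,\star)$, $\lambda(a)=a_{<0>}\cdot S^{-1}(a_{<1>})$, is an algebra isomorphism with inverse $\lambda^{-1}(a)=a_{<0>}\cdot a_{<1>}$.
   Context: Work over a field $k$. A right twisting datum $(H,\pi_r,\psi_r)$ for an algebra $A$ ($H$ a bialgebra): $A$ is a right $H$-module algebra (action $\pi_r(a\otimes h)=a\cdot h$, with $(ab)\cdot h=(a\cdot h_1)(b\cdot h_2)$, $1\cdot h=\varepsilon(h)1$) and a right $H$-comodule algebra (coaction $\psi_r(a)=a_{<0>}\otimes a_{<1>}$, an algebra map) with $(a\cdot h)_{<0>}\otimes(a\cdot h)_{<1>}=a_{<0>}\cdot h\otimes a_{<1>}$; the right twisted product is $a\diamond b=(a\cdot b_{<1>})b_{<0>}$. A left twisting datum $(K,\pi,\psi)$ for $A$: $A$ a left $K$-module algebra ($k\cdot a$) and left $K$-comodule algebra ($a\mapsto a_{(-1)}\otimes a_{(0)}$) with $(k\cdot a)_{(-1)}\otimes(k\cdot a)_{(0)}=a_{(-1)}\otimes k\cdot a_{(0)}$; the left twisted product is $a\star b=a_{(0)}(a_{(-1)}\cdot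 b)$. Here $\star$ is the left twisted product for $(H^{op},\pi_l,\psi_l)$, so $a\star b=a_{<0>}(b\cdot S^{-1}(a_{<1>}))$. *)

From HB Require Import structures.
From mathcomp Require Import all_boot all_algebra.
Set Implicit Arguments. Unset Strict Implicit. Unset Printing Implicit Defensive.
Import GRing.Theory.
Local Open Scope ring_scope.

(* Tensor products are encoded by finite sums of elementary tensors,
   s : seq (V * W) standing for \sum_(p <- s) p.1 (x) p.2 ; two such sums are
   identified iff every bilinear map (into any k-vector space) takes the same
   value on them, i.e. iff they are equal in V (x) W (universal property). *)

Section Defs.
Variable k : fieldType.

Definition lin (V W : lmodType k) (f : V -> W) : Prop :=
  forall (a : k) (x y : V), f (a *: x + y) = a *: f x + f y.

Definition linf (V : lmodType k) (f : V -> k) : Prop :=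
  forall (a : k) (x y : V), f (a *: x + y) = a * f x + f y.

Definition bilin (V W U : lmodType k) (f : V -> W -> U) : Prop :=
  (forall w, lin (fun v => f v w)) /\ (forall v, lin (f v)).

Definition trilin (V W X U : lmodType k) (f : V -> W -> X -> U) : Prop :=
  [/\ forall w x, lin (fun v => f v w x),
      forall v x, lin (fun w => f v w x) &
      forall v w, lin (f v w)].

Definition teq2 (V W : lmodType k) (s t : seq (V * W)) : Prop :=
  forall (U : lmodType k) (f : V -> W -> U), bilin f ->
    \sum_(p <- s) f p.1 p.2 = \sum_(p <- t) f p.1 p.2.

Definition teq3 (V W X : lmodType k) (s t : seq (V * W * X)) : Prop :=
  forall (U : lmodType k) (f : V -> W -> X -> U), trilin f ->
    \sum_(p <- s) f p.1.1 p.1.2 p.2 = \sum_(p <- t) f p.1.1 p.1.2 p.2.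

Definition tlin (V W X : lmodType k) (F : X -> seq (V * W)) : Prop :=
  forall (a : k) (x y : X),
    teq2 (F (a *: x + y)) ([seq (a *: p.1, p.2) | p <- F x] ++ F y).

Record bialg (H : lmodType k) := Bialg {
  bmul : H -> H -> H;
  bone : H;
  bcomul : H -> seq (H * H);
  bcounit : H -> k }.

Definition is_bialgebra (H : lmodType k) (B : bialg H) : Prop :=
  let m := bmul B in let e := bone B in
  let D := bcomul B in let eps := bcounit B in
  [/\
      [/\ bilin m, forall x y z, m (m x y) z = m x (m y z),
          forall x, m e x = x & forall x, m x e = x],
      [/\ tlin D,
          forall h, teq3 [seq (q.1, q.2, p.2) | p <- D h, q <- D p.1]
                         [seq (p.1, q.1, q.2) | p <- D h, q <- D p.2],
          linf eps,
          forall h, \sum_(p <- D h) eps p.1 *: p.2 = h &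
          forall h, \sum_(p <- D h) eps p.2 *: p.1 = h] &
      [/\ forall g h, teq2 (D (m g h)) [seq (m p.1 q.1, m p.2 q.2) | p <- D g, q <- D h],
          teq2 (D e) [:: (e, e)],
          forall g h, eps (m g h) = eps g * eps h &
          eps e = 1]].

Definition is_hopf (H : lmodType k) (B : bialg H) (S : H -> H) : Prop :=
  [/\ is_bialgebra B, lin S,
      forall h, \sum_(p <- bcomul B h) bmul B (S p.1) p.2 = bcounit B h *: bone B &
      forall h, \sum_(p <- bcomul B h) bmul B p.1 (S p.2) = bcounit B h *: bone B].

Definition bialg_op (H : lmodType k) (B : bialg H) : bialg H :=
  Bialg (fun x y => bmul B y x) (bone B) (bcomul B) (bcounit B).

(* Right twisting datum (H, pi_r, psi_r) for A:
   act a h = a . h,  coact a = sum a_<0> (x) a_<1>. *)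
Definition right_twisting_datum (A : algType k) (H : lmodType k) (B : bialg H)
  (act : A -> H -> A) (coact : A -> seq (A * H)) : Prop :=
  [/\ is_bialgebra B,
      [/\ bilin act,
          forall a, act a (bone B) = a,
          forall a g h, act (act a g) h = act a (bmul B g h),
          forall a b h, act (a * b) h = \sum_(p <- bcomul B h) act a p.1 * act b p.2 &
          forall h, act 1 h = bcounit B h *: 1],
      [/\ tlin coact,
          forall a, teq3 [seq (q.1, q.2, p.2) | p <- coact a, q <- coact p.1]
                         [seq (p.1, q.1, q.2) | p <- coact a, q <- bcomul B p.2],
          forall a, \sum_(p <- coact a) bcounit B p.2 *: p.1 = a,
          forall a b, teq2 (coact (a * b))
                           [seq (p.1 * q.1, bmul B p.2 q.2) | p <- coact a, q <- coact b] &
          teq2 (coact 1) [:: (1, bone B)]] &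
      forall a h, teq2 (coact (act a h)) [seq (act p.1 h, p.2) | p <- coact a]].

(* Left twisting datum (K, pi, psi) for A:
   lact x a = x . a,  lcoact a = sum a_(-1) (x) a_(0). *)
Definition left_twisting_datum (A : algType k) (K : lmodType k) (B : bialg K)
  (lact : K -> A -> A) (lcoact : A -> seq (K * A)) : Prop :=
  [/\ is_bialgebra B,
      [/\ bilin lact,
          forall a, lact (bone B) a = a,
          forall x y a, lact x (lact y a) = lact (bmul B x y) a,
          forall x a b, lact x (a * b) = \sum_(p <- bcomul B x) lact p.1 a * lact p.2 b &
          forall x, lact x 1 = bcounit B x *: 1],
      [/\ tlin lcoact,
          forall a, teq3 [seq (q.1, q.2, p.2) | p <- lcoact a, q <- bcomul B p.1]
                         [seq (p.1, q.1, q.2) | p <- lcoact a, q <- lcoact p.2],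
          forall a, \sum_(p <- lcoact a) bcounit B p.1 *: p.2 = a,
          forall a b, teq2 (lcoact (a * b))
                           [seq (bmul B p.1 q.1, p.2 * q.2) | p <- lcoact a, q <- lcoact b] &
          teq2 (lcoact 1) [:: (bone B, 1)]] &
      forall x a, teq2 (lcoact (lact x a)) [seq (p.1, lact x p.2) | p <- lcoact a]].

Definition rtwist (A : algType k) (H : lmodType k) (act : A -> H -> A)
  (coact : A -> seq (A * H)) (a b : A) : A :=
  \sum_(p <- coact b) act a p.2 * p.1.

Definition ltwist (A : algType k) (K : lmodType k) (lact : K -> A -> A)
  (lcoact : A -> seq (K * A)) (a b : A) : A :=
  \sum_(p <- lcoact a) p.2 * lact p.1 b.

End Defs.

From mathcomp Require Import all_boot all_algebra.
Set Implicit Arguments. Unset Strict Implicit. Unset Printing Implicit Defensive.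
Import GRing.Theory.
Local Open Scope ring_scope.

(* The antipode reverses products and coproducts: S o m is a left and
   m o (S (x) S) o tau a right convolution inverse of m, and dually for Delta.
   Hence S^-1 is an antipode for the co-opposite coalgebra, which is exactly what
   makes psi_l coassociative and multiplicative for H^op; the module axioms for
   pi_l are those of pi_r read backwards.  lambda^-1 (lambda a) is
   a_<0> . (S^-1(a_<2>) a_<1>) = a by the antipode axiom of S^-1, and similarly
   lambda (lambda^-1 a) = a.  Finally lambda(a <> b) and lambda(a) * lambda(b)
   both expand to (a_<0> . S^-1(a_<2>)) (b_<0> . (S^-1(b_<1>) S^-1(a_<1>))): on
   the left-hand side the coaction of a <> b is (a_<0> . b_<2>) b_<0> (x) a_<1> b_<1>,
   and the surplus factor b_<3> S^-1(b_<2>) collapses to a counit. *)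

Create HintDb lin.

Section Linearity.
Variable k : fieldType.
Implicit Types V W X Y U : lmodType k.

Lemma lin0 V W (f : V -> W) : lin f -> f 0 = 0.
Proof.
move=> lf; have := lf 1 0 0; rewrite scaler0 addr0 scale1r.
by move/(congr1 (fun z => z - f 0)); rewrite subrr addrK.
Qed.

Lemma linD V W (f : V -> W) x y : lin f -> f (x + y) = f x + f y.
Proof. by move=> lf; rewrite -{1}(scale1r x) lf scale1r. Qed.

Lemma linZ V W (f : V -> W) a x : lin f -> f (a *: x) = a *: f x.
Proof. by move=> lf; rewrite -[a *: x]addr0 lf (lin0 lf) addr0. Qed.

Lemma lin_sum V W (f : V -> W) I (s : seq I) (F : I -> V) :
  lin f -> f (\sum_(i <- s) F i) = \sum_(i <- s) f (F i).
Proof.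
move=> lf; elim: s => [|i s IHs]; first by rewrite !big_nil (lin0 lf).
by rewrite !big_cons (linD _ _ lf) IHs.
Qed.

Lemma linf_sum V (f : V -> k) I (s : seq I) (F : I -> V) :
  linf f -> f (\sum_(i <- s) F i) = \sum_(i <- s) f (F i).
Proof. by move=> lf; have := @lin_sum V k^o f I s F lf. Qed.

Lemma linfZ V (f : V -> k) a x : linf f -> f (a *: x) = a * f x.
Proof. by move=> lf; have := @linZ V k^o f a x lf. Qed.

Lemma lin_id V : lin (fun x : V => x).
Proof. by []. Qed.

Lemma lin_comp V W X (f : W -> X) (F : V -> W) :
  lin f -> lin F -> lin (fun x => f (F x)).
Proof. by move=> lf lF a x y; rewrite lF lf. Qed.

Lemma lin_sum_fun V W I (s : seq I) (F : I -> V -> W) :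
  (forall i, lin (F i)) -> lin (fun x => \sum_(i <- s) F i x).
Proof.
move=> lF a x y; rewrite scaler_sumr -big_split /=.
by apply: eq_bigr => i _; rewrite lF.
Qed.

Lemma lin_bilinl V W X Y (f : V -> W -> X) (F : Y -> V) w :
  bilin f -> lin F -> lin (fun y => f (F y) w).
Proof. by case=> lf _; apply: lin_comp (lf w). Qed.

Lemma lin_bilinr V W X Y (f : V -> W -> X) (F : Y -> W) v :
  bilin f -> lin F -> lin (fun y => f v (F y)).
Proof. by case=> _ lf; apply: lin_comp (lf v). Qed.

Lemma lin_trilin1 V W X U Y (f : V -> W -> X -> U) (F : Y -> V) w x :
  trilin f -> lin F -> lin (fun y => f (F y) w x).
Proof. by case=> lf _ _; apply: lin_comp (lf w x). Qed.

Lemma lin_trilin2 V W X U Y (f : V -> W -> X -> U) (F : Y -> W) v x :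
  trilin f -> lin F -> lin (fun y => f v (F y) x).
Proof. by case=> _ lf _; apply: lin_comp (lf v x). Qed.

Lemma lin_trilin3 V W X U Y (f : V -> W -> X -> U) (F : Y -> X) v w :
  trilin f -> lin F -> lin (fun y => f v w (F y)).
Proof. by case=> _ _ lf; apply: lin_comp (lf v w). Qed.

(* The summand is a function of the pair [p], so that [apply:] can unify it with
   an arbitrary expression in [p.1] and [p.2]. *)
Lemma lin_tensor_sum V W X Y U (D : X -> seq (V * W)) (f : V * W -> U)
    (F : Y -> X) :
  tlin D -> bilin (fun v w => f (v, w)) -> lin F ->
  lin (fun y => \sum_(p <- D (F y)) f p).
Proof.
move=> lD bf; apply: (@lin_comp _ _ _ (fun x => \sum_(p <- D x) f p)) => a x y.
have fE z : \sum_(p <- D z) f p = \sum_(p <- D z) (fun v w => f (v, w)) p.1 p.2.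
  by apply: eq_bigr => -[].
rewrite !fE (lD a x y U _ bf) big_cat /= big_map scaler_sumr.
by congr (_ + _); apply: eq_bigr => p _; case: bf => lf _; rewrite (linZ _ _ (lf p.2)).
Qed.

Lemma bilin_mul (A : algType k) : bilin (@GRing.mul A).
Proof. by split=> w a x y; rewrite ?mulrDl ?mulrDr -?scalerAl -?scalerAr. Qed.

Lemma teq3_allpairs V W X Y Z (s : seq (X * Y)) (t : X -> seq (V * W))
    (s' : seq (V * Z)) (t' : Z -> seq (W * Y)) U (f : V -> W -> Y -> U) :
  teq3 [seq (q.1, q.2, p.2) | p <- s, q <- t p.1]
       [seq (p.1, q.1, q.2) | p <- s', q <- t' p.2] ->
  trilin f ->
  \sum_(p <- s) \sum_(q <- t p.1) f q.1 q.2 p.2 =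
  \sum_(p <- s') \sum_(q <- t' p.2) f p.1 q.1 q.2.
Proof. by move=> eq_st lf; have := eq_st U f lf; rewrite !big_allpairs_dep. Qed.

End Linearity.

Ltac lin_fact := solve [assumption | eauto with lin].

Ltac solve_lin :=
  cbv beta; repeat first
   [ exact: lin_id
   | lin_fact
   | apply: lin_sum_fun => ?
   | match goal with |- trilin _ => split => ? ? end
   | split => ?
   | apply: lin_tensor_sum; [lin_fact | simpl |]
   | apply: lin_bilinl; [lin_fact |]
   | apply: lin_bilinr; [lin_fact |]
   | apply: lin_trilin1; [lin_fact |]
   | apply: lin_trilin2; [lin_fact |]
   | apply: lin_trilin3; [lin_fact |]
   | apply: lin_comp; [lin_fact |] ].

#[export] Hint Resolve bilin_mul : lin.

Section Bialgebra.
Variables (k : fieldType) (H : lmodType k) (B : bialg H).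
Hypothesis hB : is_bialgebra B.
Implicit Types U : lmodType k.
Local Notation m := (bmul B).
Local Notation D := (bcomul B).
Local Notation eps := (bcounit B).
Local Notation e := (bone B).

Lemma bilin_bmul : bilin m. Proof. by case: hB => -[]. Qed.
Lemma bmulA x y z : m (m x y) z = m x (m y z). Proof. by case: hB => -[]. Qed.
Lemma bmul1l x : m e x = x. Proof. by case: hB => -[]. Qed.
Lemma bmul1r x : m x e = x. Proof. by case: hB => -[]. Qed.
Lemma tlin_comul : tlin D. Proof. by case: hB => _ []. Qed.
Lemma linf_counit : linf eps. Proof. by case: hB => _ []. Qed.
Lemma counitM g h : eps (m g h) = eps g * eps h. Proof. by case: hB => _ _ []. Qed.
Lemma counit1 : eps e = 1. Proof. by case: hB => _ _ []. Qed.

Lemma comulA U (G : H -> H -> H -> U) h : trilin G ->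
  \sum_(p <- D h) \sum_(q <- D p.1) G q.1 q.2 p.2 =
  \sum_(p <- D h) \sum_(q <- D p.2) G p.1 q.1 q.2.
Proof. by case: hB => _ [_ coassoc _ _ _] _; apply: teq3_allpairs. Qed.

Lemma counitl U (F : H -> U) h : lin F -> \sum_(p <- D h) eps p.1 *: F p.2 = F h.
Proof.
case: hB => _ [_ _ _ cu _] _ lF; rewrite -[in RHS](cu h) (lin_sum _ _ lF).
by apply: eq_bigr => p _; rewrite linZ.
Qed.

Lemma counitr U (F : H -> U) h : lin F -> \sum_(p <- D h) eps p.2 *: F p.1 = F h.
Proof.
case: hB => _ [_ _ _ _ cu] _ lF; rewrite -[in RHS](cu h) (lin_sum _ _ lF).
by apply: eq_bigr => p _; rewrite linZ.
Qed.

Lemma comulM U (f : H -> H -> U) g h : bilin f ->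
  \sum_(r <- D (m g h)) f r.1 r.2 =
  \sum_(p <- D g) \sum_(q <- D h) f (m p.1 q.1) (m p.2 q.2).
Proof. by case: hB => _ _ [DM _ _ _] bf; rewrite (DM g h U f bf) big_allpairs_dep. Qed.

Lemma comul1 U (f : H -> H -> U) : bilin f -> \sum_(r <- D e) f r.1 r.2 = f e e.
Proof. by case: hB => _ _ [_ D1 _ _] bf; rewrite (D1 U f bf) big_seq1. Qed.

Lemma bialgebra_op : is_bialgebra (bialg_op B).
Proof.
case: hB => _ coalg _; split=> //=.
- by split=> [|x y z|x|x]; rewrite ?bmulA ?bmul1l ?bmul1r //; case: bilin_bmul.
- split=> [g h U f bf||g h|]; last exact: counit1; last by rewrite counitM mulrC.
    by rewrite comulM // big_allpairs_dep exchange_big.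
  by move=> U f bf; rewrite comul1 // big_seq1.
Qed.

End Bialgebra.

#[export] Hint Resolve bilin_bmul tlin_comul linf_counit : lin.

Section Antipode.
Variables (k : fieldType) (H : lmodType k) (B : bialg H) (S : H -> H).
Hypothesis hS : is_hopf B S.
Implicit Types U : lmodType k.
Local Notation m := (bmul B).
Local Notation D := (bcomul B).
Local Notation eps := (bcounit B).
Local Notation e := (bone B).

Lemma hopf_bialgebra : is_bialgebra B. Proof. by case: hS. Qed.
Lemma lin_antipode : lin S. Proof. by case: hS. Qed.
Lemma antipodeL h : \sum_(p <- D h) m (S p.1) p.2 = eps h *: e. Proof. by case: hS. Qed.
Lemma antipodeR h : \sum_(p <- D h) m p.1 (S p.2) = eps h *: e. Proof. by case: hS. Qed.

#[local] Hint Resolve lin_antipode : lin.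
Let hB := hopf_bialgebra.

Lemma antipodeL_mul z h : \sum_(p <- D h) m (S p.1) (m p.2 z) = eps h *: z.
Proof.
have lmz : lin (fun x => m x z) by solve_lin.
under eq_bigr do rewrite -bmulA //.
by rewrite -(lin_sum _ _ lmz) antipodeL (linZ _ _ lmz) bmul1l.
Qed.

Lemma antipodeR_mul z h : \sum_(p <- D h) m p.1 (m (S p.2) z) = eps h *: z.
Proof.
have lmz : lin (fun x => m x z) by solve_lin.
under eq_bigr do rewrite -bmulA //.
by rewrite -(lin_sum _ _ lmz) antipodeR (linZ _ _ lmz) bmul1l.
Qed.

Lemma antipode1 : S e = e.
Proof.
rewrite -[LHS](bmul1r hB) -(comul1 hB (f := fun x y => m (S x) y)); last by solve_lin.
by rewrite antipodeL counit1 // scale1r.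
Qed.

Lemma counit_antipode h : eps (S h) = eps h.
Proof.
have le := linf_counit hB.
have -> : eps h = \sum_(p <- D h) eps (S p.1) * eps p.2.
  rewrite -[LHS]mulr1 -(counit1 hB) -(linfZ _ _ le) -antipodeL (linf_sum _ _ le).
  by apply: eq_bigr => p _; rewrite counitM.
rewrite -{1}(counitr hB h (@lin_id _ H)) (lin_sum _ _ lin_antipode) (linf_sum _ _ le).
by apply: eq_bigr => p _; rewrite (linZ _ _ lin_antipode) (linfZ _ _ le) mulrC.
Qed.

Lemma comul_mul_antipode_rev x y :
  \sum_(r <- D x) \sum_(s <- D y) m (m r.1 s.1) (m (S s.2) (S r.2)) =
  (eps x * eps y) *: e.
Proof.
transitivity (\sum_(r <- D x) eps y *: m r.1 (S r.2)).
  apply: eq_bigr => r _; have lrm : lin (fun z => m r.1 z) by solve_lin.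
  under eq_bigr do rewrite !bmulA //.
  by rewrite -(lin_sum _ _ lrm) antipodeR_mul (linZ _ _ lrm).
by rewrite -scaler_sumr antipodeR scalerA mulrC.
Qed.

Lemma antipode_comul_mul x y z :
  \sum_(r <- D x) \sum_(s <- D y) m (S (m r.1 s.1)) (m (m r.2 s.2) z) =
  (eps x * eps y) *: z.
Proof.
rewrite -(comulM hB (f := fun u v => m (S u) (m v z))); last by solve_lin.
by rewrite antipodeL_mul counitM.
Qed.

(* Both sides equal T, S o m being a left and m o (S (x) S) o tau a right
   convolution inverse of m on H (x) H. *)
Lemma antipode_antimul g h : S (m g h) = m (S h) (S g).
Proof.
pose F x1 y1 x2 y2 x3 y3 := m (S (m x1 y1)) (m (m x2 y2) (m (S y3) (S x3))).
set T := \sum_(p <- D g) \sum_(q <- D h) \sum_(r <- D p.2) \sum_(s <- D q.2)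
           F p.1 q.1 r.1 s.1 r.2 s.2.
have <- : T = S (m g h).
  transitivity (\sum_(p <- D g) eps p.2 *: \sum_(q <- D h) eps q.2 *: S (m p.1 q.1)).
    apply: eq_bigr => p _; rewrite scaler_sumr; apply: eq_bigr => q _.
    have lSm : lin (fun z => m (S (m p.1 q.1)) z) by solve_lin.
    rewrite scalerA -[S _](bmul1r hB) -(linZ _ _ lSm) -comul_mul_antipode_rev.
    by rewrite (lin_sum _ _ lSm); apply: eq_bigr => r _; rewrite (lin_sum _ _ lSm).
  transitivity (\sum_(p <- D g) eps p.2 *: S (m p.1 h)).
    apply: eq_bigr => p _; congr (_ *: _).
    by apply: (counitr hB (F := fun y => S (m p.1 y))); solve_lin.
  by apply: (counitr hB (F := fun x => S (m x h))); solve_lin.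
transitivity (\sum_(p <- D g) \sum_(r <- D p.1) \sum_(q <- D h) \sum_(s <- D q.1)
           F r.1 s.1 r.2 s.2 p.2 q.2).
  rewrite /T; under eq_bigr do rewrite exchange_big.
  rewrite -(comulA hB (G := fun x1 x2 x3 => \sum_(q <- D h) \sum_(s <- D q.2)
           F x1 q.1 x2 s.1 x3 s.2)) /=; last by rewrite /F; solve_lin.
  apply: eq_bigr => p _; apply: eq_bigr => r _.
  rewrite (comulA hB (G := fun y1 y2 y3 => F r.1 y1 r.2 y2 p.2 y3)) //.
  by rewrite /F; solve_lin.
transitivity (\sum_(p <- D g) eps p.1 *: \sum_(q <- D h) eps q.1 *: m (S q.2) (S p.2)).
  apply: eq_bigr => p _; rewrite exchange_big scaler_sumr; apply: eq_bigr => q _.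
  by rewrite antipode_comul_mul scalerA.
transitivity (\sum_(p <- D g) eps p.1 *: m (S h) (S p.2)).
  apply: eq_bigr => p _; congr (_ *: _).
  by apply: (counitl hB (F := fun y => m (S y) (S p.2))); solve_lin.
by apply: (counitl hB (F := fun x => m (S h) (S x))); solve_lin.
Qed.

(* (S (x) S) o tau o Delta is a right convolution inverse of Delta in
   Hom(H, H (x) H); the multipliers [c], [d] make it usable under a sum. *)
Lemma comul_conv_antipode_rev U (f : H -> H -> U) c d y : bilin f ->
  \sum_(q <- D y) \sum_(u <- D q.1) \sum_(v <- D q.2)
     f (m c (m u.1 (S v.2))) (m d (m u.2 (S v.1))) = eps y *: f c d.
Proof.
move=> bf; pose g a b := f (m c a) (m d b).
have bg : bilin g by rewrite /g; solve_lin.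
rewrite (comulA hB (G := fun a b z => \sum_(v <- D z) g (m a (S v.2)) (m b (S v.1))));
  last by solve_lin.
transitivity (\sum_(q <- D y) \sum_(u <- D q.2) \sum_(v <- D u.1)
   g (m q.1 (S u.2)) (m v.1 (S v.2))).
  apply: eq_bigr => q _.
  by rewrite -(comulA hB (G := fun b x z => g (m q.1 (S z)) (m b (S x)))) //; solve_lin.
transitivity (\sum_(q <- D y) g (m q.1 (S q.2)) e).
  apply: eq_bigr => q _.
  transitivity (\sum_(u <- D q.2) eps u.1 *: g (m q.1 (S u.2)) e); last first.
    by apply: (counitl hB (F := fun x => g (m q.1 (S x)) e)); solve_lin.
  apply: eq_bigr => u _.
  have lg : lin (fun x => g (m q.1 (S u.2)) x) by solve_lin.
  by rewrite -(linZ _ _ lg) -antipodeR (lin_sum _ _ lg).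
have lg : lin (fun x => g x e) by solve_lin.
by rewrite -(lin_sum _ _ lg) antipodeR (linZ _ _ lg) /g !bmul1r.
Qed.

Lemma antipode_anticomul U (f : H -> H -> U) h : bilin f ->
  \sum_(t <- D (S h)) f t.1 t.2 = \sum_(p <- D h) f (S p.2) (S p.1).
Proof.
move=> bf.
pose G x y z := \sum_(t <- D (S x)) \sum_(u <- D y) \sum_(v <- D z)
   f (m t.1 (m u.1 (S v.2))) (m t.2 (m u.2 (S v.1))).
have tG : trilin G by rewrite /G; solve_lin.
have <- : \sum_(p <- D h) \sum_(q <- D p.2) G p.1 q.1 q.2 =
          \sum_(t <- D (S h)) f t.1 t.2.
  transitivity (\sum_(p <- D h) eps p.2 *: \sum_(t <- D (S p.1)) f t.1 t.2); last first.
    by apply: (counitr hB (F := fun x => \sum_(t <- D (S x)) f t.1 t.2)); solve_lin.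
  apply: eq_bigr => p _; rewrite /G exchange_big scaler_sumr /=.
  by apply: eq_bigr => t _; rewrite comul_conv_antipode_rev.
rewrite -(comulA hB (G := G)) //.
transitivity (\sum_(p <- D h) eps p.1 *: \sum_(v <- D p.2) f (S v.2) (S v.1)); last first.
  by apply: (counitl hB (F := fun z => \sum_(v <- D z) f (S v.2) (S v.1))); solve_lin.
apply: eq_bigr => p _; rewrite /G.
pose W a b := \sum_(v <- D p.2) f (m a (S v.2)) (m b (S v.1)).
have bW : bilin W by rewrite /W; solve_lin.
have lW : lin (fun x => \sum_(r <- D x) W r.1 r.2) by solve_lin.
transitivity (\sum_(q <- D p.1) \sum_(r <- D (m (S q.1) q.2)) W r.1 r.2).
  apply: eq_bigr => q _; rewrite (comulM hB _ _ bW).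
  apply: eq_bigr => t _; apply: eq_bigr => u _; rewrite /W.
  by apply: eq_bigr => v _; rewrite !bmulA.
rewrite -(lin_sum _ _ lW) antipodeL (linZ _ _ lW) (comul1 hB bW) /W.
by congr (_ *: _); apply: eq_bigr => v _; rewrite !bmul1l.
Qed.

End Antipode.

#[export] Hint Resolve lin_antipode : lin.

Section InverseAntipode.
Variables (k : fieldType) (H : lmodType k) (B : bialg H) (S Sinv : H -> H).
Hypotheses (hS : is_hopf B S) (SK : cancel S Sinv) (SinvK : cancel Sinv S).
Implicit Types U : lmodType k.
Local Notation m := (bmul B).
Local Notation D := (bcomul B).
Local Notation eps := (bcounit B).
Local Notation e := (bone B).

Let hB := hopf_bialgebra hS.

Lemma lin_Sinv : lin Sinv.
Proof. by move=> a x y; apply: (can_inj SK); rewrite (lin_antipode hS) !SinvK. Qed.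

#[local] Hint Resolve lin_Sinv : lin.

Lemma Sinv1 : Sinv e = e.
Proof. by rewrite -{1}(antipode1 hS) SK. Qed.

Lemma counit_Sinv h : eps (Sinv h) = eps h.
Proof. by rewrite -(counit_antipode hS) SinvK. Qed.

Lemma Sinv_antimul g h : Sinv (m g h) = m (Sinv h) (Sinv g).
Proof. by apply: (can_inj SK); rewrite (antipode_antimul hS) !SinvK. Qed.

Lemma Sinv_anticomul U (f : H -> H -> U) h : bilin f ->
  \sum_(t <- D (Sinv h)) f t.1 t.2 = \sum_(p <- D h) f (Sinv p.2) (Sinv p.1).
Proof.
move=> bf; have bf' : bilin (fun u v => f (Sinv v) (Sinv u)) by solve_lin.
rewrite -{2}(SinvK h) (antipode_anticomul hS _ bf').
by apply: eq_bigr => p _; rewrite !SK.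
Qed.

Lemma Sinv_antipodeL h : \sum_(p <- D h) m (Sinv p.2) p.1 = eps h *: e.
Proof.
apply: (can_inj SK); rewrite (lin_sum _ _ (lin_antipode hS)).
rewrite (linZ _ _ (lin_antipode hS)) (antipode1 hS) -(antipodeL hS).
by apply: eq_bigr => p _; rewrite (antipode_antimul hS) SinvK.
Qed.

Lemma Sinv_antipodeR h : \sum_(p <- D h) m p.2 (Sinv p.1) = eps h *: e.
Proof.
apply: (can_inj SK); rewrite (lin_sum _ _ (lin_antipode hS)).
rewrite (linZ _ _ (lin_antipode hS)) (antipode1 hS) -(antipodeR hS).
by apply: eq_bigr => p _; rewrite (antipode_antimul hS) SinvK.
Qed.

Lemma Sinv_antipodeR_mul z h : \sum_(p <- D h) m p.2 (m (Sinv p.1) z) = eps h *: z.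
Proof.
have lmz : lin (fun x => m x z) by solve_lin.
under eq_bigr do rewrite -(bmulA hB).
by rewrite -(lin_sum _ _ lmz) Sinv_antipodeR (linZ _ _ lmz) bmul1l.
Qed.

End InverseAntipode.

#[export] Hint Resolve lin_Sinv : lin.

Section RightTwistingDatum.
Variables (k : fieldType) (A : algType k) (H : lmodType k) (B : bialg H).
Variables (act : A -> H -> A) (coact : A -> seq (A * H)).
Hypothesis hR : right_twisting_datum B act coact.
Implicit Types U : lmodType k.
Local Notation m := (bmul B).
Local Notation D := (bcomul B).
Local Notation eps := (bcounit B).
Local Notation e := (bone B).

Lemma twisting_bialgebra : is_bialgebra B. Proof. by case: hR. Qed.
Lemma bilin_act : bilin act. Proof. by case: hR => _ []. Qed.
Lemma act_bone a : act a e = a. Proof. by case: hR => _ []. Qed.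
Lemma actA a g h : act (act a g) h = act a (m g h). Proof. by case: hR => _ []. Qed.
Lemma actM a b h : act (a * b) h = \sum_(p <- D h) act a p.1 * act b p.2.
Proof. by case: hR => _ []. Qed.
Lemma act1 h : act 1 h = eps h *: 1. Proof. by case: hR => _ []. Qed.
Lemma tlin_coact : tlin coact. Proof. by case: hR => _ _ []. Qed.

#[local] Hint Resolve twisting_bialgebra bilin_act tlin_coact : lin.

Lemma coactA U (G : A -> H -> H -> U) a : trilin G ->
  \sum_(p <- coact a) \sum_(q <- coact p.1) G q.1 q.2 p.2 =
  \sum_(p <- coact a) \sum_(q <- D p.2) G p.1 q.1 q.2.
Proof. by case: hR => _ _ [_ coassoc _ _ _] _; apply: teq3_allpairs. Qed.

Lemma coact_counit a : \sum_(p <- coact a) eps p.2 *: p.1 = a.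
Proof. by case: hR => _ _ []. Qed.

Lemma coactM U (f : A -> H -> U) a b : bilin f ->
  \sum_(r <- coact (a * b)) f r.1 r.2 =
  \sum_(p <- coact a) \sum_(q <- coact b) f (p.1 * q.1) (m p.2 q.2).
Proof.
by case: hR => _ _ [_ _ _ cM _] _ bf; rewrite (cM a b U f bf) big_allpairs_dep.
Qed.

Lemma coact1 U (f : A -> H -> U) : bilin f -> \sum_(r <- coact 1) f r.1 r.2 = f 1 e.
Proof. by case: hR => _ _ [_ _ _ _ c1] _ bf; rewrite (c1 U f bf) big_seq1. Qed.

Lemma coact_act U (f : A -> H -> U) a h : bilin f ->
  \sum_(r <- coact (act a h)) f r.1 r.2 = \sum_(p <- coact a) f (act p.1 h) p.2.
Proof. by case: hR => _ _ _ cact bf; rewrite (cact a h U f bf) big_map. Qed.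

Lemma coact_rtwist U (f : A -> H -> U) a b : bilin f ->
  \sum_(t <- coact (rtwist act coact a b)) f t.1 t.2 =
  \sum_(p <- coact b) \sum_(q <- D p.2) \sum_(r <- coact a)
     f (act r.1 q.2 * p.1) (m r.2 q.1).
Proof.
move=> bf; have lcf : lin (fun x => \sum_(t <- coact x) f t.1 t.2) by solve_lin.
rewrite /rtwist (lin_sum _ _ lcf) /=.
transitivity (\sum_(p <- coact b) \sum_(s <- coact p.1) \sum_(r <- coact a)
     f (act r.1 p.2 * s.1) (m r.2 s.2)).
  apply: eq_bigr => p _; rewrite exchange_big (coactM _ _ bf).
  by rewrite (coact_act (f := fun u g => \sum_(s <- coact p.1) f (u * s.1) (m g s.2)));
    last solve_lin.
by rewrite (coactA (G := fun x y z => \sum_(r <- coact a) f (act r.1 z * x) (m r.2 y)));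
  last solve_lin.
Qed.

End RightTwistingDatum.

#[export] Hint Resolve bilin_act tlin_coact : lin.

Section OppositeTwistingDatum.
Variables (k : fieldType) (A : algType k) (H : lmodType k) (B : bialg H).
Variables (S Sinv : H -> H) (act : A -> H -> A) (coact : A -> seq (A * H)).
Hypotheses (hS : is_hopf B S) (SK : cancel S Sinv) (SinvK : cancel Sinv S).
Hypothesis hR : right_twisting_datum B act coact.
Implicit Types U : lmodType k.
Local Notation m := (bmul B).
Local Notation D := (bcomul B).
Local Notation eps := (bcounit B).
Local Notation e := (bone B).

Let hB := hopf_bialgebra hS.

Definition op_act (h : H) (a : A) : A := act a h.
Definition op_coact (a : A) : seq (H * A) := [seq (Sinv p.2, p.1) | p <- coact a].

Lemma tlin_op_coact : tlin op_coact.
Proof.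
move=> c x y U f bf; rewrite big_cat !big_map /=.
have bf' : bilin (fun u h => f (Sinv h) u) by solve_lin.
rewrite (tlin_coact hR c x y bf') big_cat /= big_map; congr (_ + _).
apply: eq_bigr => p _; case: bf => lf1 lf2.
by rewrite (linZ _ _ (lf1 _)) (linZ _ _ (lf2 _)).
Qed.

Lemma op_coactA a :
  teq3 [seq (q.1, q.2, p.2) | p <- op_coact a, q <- D p.1]
       [seq (p.1, q.1, q.2) | p <- op_coact a, q <- op_coact p.2].
Proof.
move=> U f tf; rewrite !big_allpairs_dep !big_map.
transitivity (\sum_(p <- coact a) \sum_(q <- D p.2) f (Sinv q.2) (Sinv q.1) p.1).
  apply: eq_bigr => p _.
  by rewrite (Sinv_anticomul hS SK SinvK (f := fun u v => f u v p.1)); last solve_lin.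
rewrite -(coactA hR (G := fun x y z => f (Sinv z) (Sinv y) x)); last solve_lin.
by apply: eq_bigr => p _; rewrite big_map.
Qed.

Lemma left_twisting_datum_op : left_twisting_datum (bialg_op B) op_act op_coact.
Proof.
have bf' U (f : H -> A -> U) : bilin f -> bilin (fun u h => f (Sinv h) u).
  by move=> bf; solve_lin.
split; first exact: bialgebra_op.
- split=> /= [|a|x y a|x a b|x]; rewrite /op_act.
  + by case: (bilin_act hR).
  + exact: (act_bone hR).
  + exact: (actA hR).
  + exact: (actM hR).
  + exact: (act1 hR).
- split=> [||a|a b U f bf|U f bf]; [exact: tlin_op_coact | exact: op_coactA | | |].
  + rewrite big_map -[RHS](coact_counit hR).
    by under eq_bigr do rewrite (counit_Sinv hS SinvK).
  + rewrite big_map (coactM hR _ _ (bf' U f bf)) big_allpairs_dep big_map /=.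
    apply: eq_bigr => p _; rewrite big_map.
    by apply: eq_bigr => q _; rewrite (Sinv_antimul hS SK SinvK).
  + by rewrite big_map (coact1 hR (bf' U f bf)) big_seq1 (Sinv1 hS SK).
- move=> x a U f bf; rewrite !big_map (coact_act hR _ _ (bf' U f bf)).
  by apply: eq_bigr => p _.
Qed.

Definition lam (a : A) : A := \sum_(p <- coact a) act p.1 (Sinv p.2).
Definition lam_inv (a : A) : A := \sum_(p <- coact a) act p.1 p.2.

Lemma lin_lam : lin lam. Proof. by rewrite /lam; solve_lin. Qed.
Lemma lin_lam_inv : lin lam_inv. Proof. by rewrite /lam_inv; solve_lin. Qed.

Lemma lam1 : lam 1 = 1.
Proof.
rewrite /lam (coact1 hR (f := fun u h => act u (Sinv h))); last by solve_lin.
by rewrite (Sinv1 hS SK) (act_bone hR).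
Qed.

Lemma lamK : cancel lam lam_inv.
Proof.
move=> a; rewrite {1}/lam (lin_sum _ _ lin_lam_inv) /lam_inv.
transitivity (\sum_(p <- coact a) \sum_(q <- coact p.1) act q.1 (m (Sinv p.2) q.2)).
  apply: eq_bigr => p _; rewrite (coact_act hR (f := act)); last by solve_lin.
  by apply: eq_bigr => q _; rewrite (actA hR).
rewrite (coactA hR (G := fun x y z => act x (m (Sinv z) y))); last by solve_lin.
rewrite -[RHS](coact_counit hR); apply: eq_bigr => p _.
have lp : lin (act p.1) by solve_lin.
by rewrite -(lin_sum _ _ lp) (Sinv_antipodeL hS SK SinvK) (linZ _ _ lp) (act_bone hR).
Qed.

Lemma lam_invK : cancel lam_inv lam.
Proof.
move=> a; rewrite {1}/lam_inv (lin_sum _ _ lin_lam) /lam.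
transitivity (\sum_(p <- coact a) \sum_(q <- coact p.1) act q.1 (m p.2 (Sinv q.2))).
  apply: eq_bigr => p _.
  rewrite (coact_act hR (f := fun u h => act u (Sinv h))); last by solve_lin.
  by apply: eq_bigr => q _; rewrite (actA hR).
rewrite (coactA hR (G := fun x y z => act x (m z (Sinv y)))); last by solve_lin.
rewrite -[RHS](coact_counit hR); apply: eq_bigr => p _.
have lp : lin (act p.1) by solve_lin.
by rewrite -(lin_sum _ _ lp) (Sinv_antipodeR hS SK SinvK) (linZ _ _ lp) (act_bone hR).
Qed.

Lemma coact_lam U (f : A -> H -> U) a : bilin f ->
  \sum_(t <- coact (lam a)) f t.1 t.2 =
  \sum_(r <- coact a) \sum_(z <- D r.2) f (act r.1 (Sinv z.2)) z.1.
Proof.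
move=> bf; have lcf : lin (fun x => \sum_(t <- coact x) f t.1 t.2) by solve_lin.
rewrite /lam (lin_sum _ _ lcf).
under eq_bigr do rewrite (coact_act hR _ _ bf).
by rewrite (coactA hR (G := fun x y z => f (act x (Sinv z)) y)); last solve_lin.
Qed.

Lemma act_lam b g : act (lam b) g = \sum_(p <- coact b) act p.1 (m (Sinv p.2) g).
Proof.
have lg : lin (fun x => act x g) by solve_lin.
by rewrite /lam (lin_sum _ _ lg); under eq_bigr do rewrite (actA hR).
Qed.

Lemma act_Sinv_mul x y g h :
  act (x * y) (Sinv (m g h)) =
  \sum_(w <- D h) \sum_(z <- D g)
     act x (m (Sinv w.2) (Sinv z.2)) * act y (m (Sinv w.1) (Sinv z.1)).
Proof.
rewrite (Sinv_antimul hS SK SinvK) (actM hR).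
rewrite (comulM hB (f := fun u v => act x u * act y v)); last by solve_lin.
rewrite (Sinv_anticomul hS SK SinvK (f := fun u1 u2 => \sum_(v <- D (Sinv g))
            act x (m u1 v.1) * act y (m u2 v.2))); last by solve_lin.
apply: eq_bigr => w _.
by rewrite (Sinv_anticomul hS SK SinvK (f := fun v1 v2 =>
            act x (m (Sinv w.2) v1) * act y (m (Sinv w.1) v2))); last solve_lin.
Qed.

Lemma lam_rtwist a b :
  lam (rtwist act coact a b) =
  \sum_(p <- coact b) \sum_(r <- coact a) \sum_(z <- D r.2)
     act r.1 (Sinv z.2) * act p.1 (m (Sinv p.2) (Sinv z.1)).
Proof.
rewrite /lam (coact_rtwist hR (f := fun u h => act u (Sinv h))); last by solve_lin.
apply: eq_bigr => p _.
pose G x1 x2 x3 := \sum_(r <- coact a) \sum_(z <- D r.2)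
   act r.1 (m x3 (m (Sinv x2) (Sinv z.2))) * act p.1 (m (Sinv x1) (Sinv z.1)).
transitivity (\sum_(q <- D p.2) \sum_(w <- D q.1) G w.1 w.2 q.2).
  apply: eq_bigr => q _; rewrite exchange_big; apply: eq_bigr => r _ /=.
  rewrite act_Sinv_mul; apply: eq_bigr => w _.
  by apply: eq_bigr => z _; rewrite (actA hR).
rewrite (comulA hB (G := G)); last by rewrite /G; solve_lin.
transitivity (\sum_(q <- D p.2) eps q.2 *: \sum_(r <- coact a) \sum_(z <- D r.2)
     act r.1 (Sinv z.2) * act p.1 (m (Sinv q.1) (Sinv z.1))); last first.
  by apply: (counitr hB (F := fun x => \sum_(r <- coact a) \sum_(z <- D r.2)
     act r.1 (Sinv z.2) * act p.1 (m (Sinv x) (Sinv z.1)))); solve_lin.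
apply: eq_bigr => q _; rewrite /G exchange_big scaler_sumr; apply: eq_bigr => r _.
rewrite exchange_big scaler_sumr; apply: eq_bigr => z _.
have lr : lin (fun x => act r.1 x * act p.1 (m (Sinv q.1) (Sinv z.1))) by solve_lin.
by rewrite -(lin_sum _ _ lr) (Sinv_antipodeR_mul hS SK SinvK) (linZ _ _ lr).
Qed.

Lemma ltwist_lam a b :
  ltwist op_act op_coact (lam a) (lam b) =
  \sum_(p <- coact b) \sum_(r <- coact a) \sum_(z <- D r.2)
     act r.1 (Sinv z.2) * act p.1 (m (Sinv p.2) (Sinv z.1)).
Proof.
rewrite /ltwist big_map /op_act /=.
rewrite (coact_lam (f := fun u h => u * act (lam b) (Sinv h))); last by solve_lin.
rewrite exchange_big; apply: eq_bigr => r _.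
rewrite exchange_big; apply: eq_bigr => z _.
by rewrite act_lam mulr_sumr.
Qed.

Lemma lamM a b : lam (rtwist act coact a b) = ltwist op_act op_coact (lam a) (lam b).
Proof. by rewrite lam_rtwist ltwist_lam. Qed.

End OppositeTwistingDatum.

Theorem theorem4p8 (k : fieldType) (A : algType k) (H : lmodType k)
  (B : bialg H) (S Sinv : H -> H)
  (act : A -> H -> A) (coact : A -> seq (A * H)) :
  is_hopf B S -> cancel S Sinv -> cancel Sinv S ->
  right_twisting_datum B act coact ->
  let pil : H -> A -> A := fun h a => act a h in
  let psil : A -> seq (H * A) := fun a => [seq (Sinv p.2, p.1) | p <- coact a] in
  let lam : A -> A := fun a => \sum_(p <- coact a) act p.1 (Sinv p.2) in
  let laminv : A -> A := fun a => \sum_(p <- coact a) act p.1 p.2 in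
  left_twisting_datum (bialg_op B) pil psil /\
  [/\ lin lam, lam 1 = 1,
      forall a b, lam (rtwist act coact a b) = ltwist pil psil (lam a) (lam b),
      cancel lam laminv & cancel laminv lam].
Proof.
move=> hS SK SinvK hR pil psil lam laminv.
split; first exact: (left_twisting_datum_op hS SK SinvK hR).
split.
- exact: (lin_lam hS SK SinvK hR).
- exact: (lam1 hS SK SinvK hR).
- exact: (lamM hS SK SinvK hR).
- exact: (lamK hS SK SinvK hR).
- exact: (lam_invK hS SK SinvK hR).
Qed.
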